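(* Let $n\ge2$ and $B_n=\langle a,b\mid ba=b^n\rangle$. 1. If $\mathsf d$ denotes the Levenshtein distance, then $\mathsf c_{\mathsf d}(B_n)=n-1$; and $B_n$ is half-factorial if and only if $n=2$. 2. For all $k,m\in\mathbb N_0$, \[\mathsf L(a^kb^m)=k+m-q_{m,n}(n-2)+(n-2)\cdot[0,q_{m,n}],\] where $q_{m,n}=\lfloor m/(n-1)\rfloor$ if $(n-1)\nmid m$; $q_{m,n}=\frac{m}{n-1}-1$ if $(n-1)\mid m$ and $m\neq0$; and $q_{m,n}=0$ if $m=0$.
   Context: $B_n$ is the monoid with generators $a,b$ and single relation $ba=b^n$; it is reduced and atomic with atoms $a,b$, and every element is uniquely $a^kb^m$ ($k,m\in\mathbb N_0$). Factorizations are words in the free monoid $\mathcal F^*(\{a,b\})$; $\pi$ maps a word to the element it represents; $\sim=\{(x,y)\mid\pi(x)=\pi(y)\}$. $\mathsf L(x)=\{|z|:\pi(z)=x\}$ (with $\mathsf L(1)=\{0\}$). The Levenshtein distance between words $z,z'$ is the minimal number of substitutions, deletions or insertions of single letters needed to transform $z$ into $z'$. For $x\in B_n$, the catenary degree $\mathsf c_{\mathsf d}(x)$ is the least $N\in\mathbb N_0\cup\{\infty\}$ such that any two factorizations $z,z'$ of $x$ are connected by a chain $z=z_0,\dots,z_r=z'$ of factorizations of $x$ with $\mathsf d(z_{i-1},z_i)\le N$; $\mathsf c_{\mathsf d}(B_n)=\sup_x\mathsf c_{\mathsf d}(x)$. Half-factorial: $|\mathsf L(x)|=1$ for all $x$.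 Notation: $[u,v]=\{z\in\mathbb Z:u\le z\le v\}$, $d\cdot L=\{dl:l\in L\}$, $m+L=\{m+l:l\in L\}$. *)

From mathcomp Require Import all_boot.
Set Implicit Arguments. Unset Strict Implicit. Unset Printing Implicit Defensive.

(* The two atoms a, b; factorizations are words in the free monoid on {a,b}. *)
Inductive letter := La | Lb.
Definition word := seq letter.

(* Two words are related iff they
   represent the same element of B_n (pi z = pi z'). *)
Inductive cong (n : nat) : word -> word -> Prop :=
| cong_rel (u v : word) : cong n (u ++ [:: Lb; La] ++ v) (u ++ nseq n Lb ++ v)
| cong_refl (z : word) : cong n z z
| cong_sym (z z' : word) : cong n z z' -> cong n z' z
| cong_trans (z1 z2 z3 : word) : cong n z1 z2 -> cong n z2 z3 -> cong n z1 z3.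

(* An element x of B_n is given by any word w with pi w = x; the
   factorizations of x are then the words z with cong n w z. *)

Definition akbm (k m : nat) : word := nseq k La ++ nseq m Lb.

Definition lengths (n : nat) (w : word) (l : nat) : Prop :=
  exists z, cong n w z /\ size z = l.

Inductive edit1 : word -> word -> Prop :=
| ed_sub (u v : word) (x y : letter) : edit1 (u ++ x :: v) (u ++ y :: v)
| ed_del (u v : word) (x : letter) : edit1 (u ++ x :: v) (u ++ v)
| ed_ins (u v : word) (x : letter) : edit1 (u ++ v) (u ++ x :: v).

Inductive nedits : nat -> word -> word -> Prop :=
| ned0 (z : word) : nedits 0 z z
| nedS (k : nat) (z y z' : word) : edit1 z y -> nedits k y z' -> nedits k.+1 z z'.

(* d(z,z') <= N, where d is the Levenshtein distance (minimal number of edits). *)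
Definition lev_le (N : nat) (z z' : word) : Prop :=
  exists k, k <= N /\ nedits k z z'.

Inductive chain (R : word -> word -> Prop) : word -> word -> Prop :=
| chain_nil (z : word) : chain R z z
| chain_cons (z y z' : word) : R z y -> chain R y z' -> chain R z z'.

Definition catenary_ok (n N : nat) (w : word) : Prop :=
  forall z z', cong n w z -> cong n w z' ->
    chain (fun u v => cong n w v /\ lev_le N u v) z z'.

Definition catenary_degree_elt (n : nat) (w : word) (N : nat) : Prop :=
  catenary_ok n N w /\ forall M, catenary_ok n M w -> N <= M.

Definition half_factorial (n : nat) : Prop :=
  forall w z z', cong n w z -> cong n w z' -> size z = size z'.

Definition qmn (m n : nat) : nat :=
  if m == 0 then 0
  else if (n.-1 %| m) then m %/ n.-1 - 1 else m %/ n.-1.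

From mathcomp Require Import all_boot.
From mathcomp Require Import zify.
From Stdlib Require Import Classical.

Set Implicit Arguments.
Unset Strict Implicit.
Unset Printing Implicit Defensive.

(** Every word z can be rewritten by the relation [ba -> b^n] into the normal
    form a^k b^m, where k is the number of leading a's of z and every a after
    the first b contributes n - 1 further b's; (k, m) is invariant under the
    relation, so it classifies factorizations.  One rewriting step is n - 1
    edits (substitute a by b, insert n - 2 b's), which bounds the catenary
    degree by n - 1.  Conversely every edit changes the number of b's by at
    most one, while the factorizations of b^n contain either 1 or n letters b,
    so ba and b^n cannot be joined by a chain of smaller steps.  For lengths,
    a factorization of a^k b^m with j letters a after its first b has length
    k + m - (n - 2) j, and the feasible j form exactly [0, q_{m,n}]. *)

Definition is_a (x : letter) : bool := if x is La then true else false.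
Definition is_b (x : letter) : bool := if x is Lb then true else false.

Lemma size_count_ab z : size z = count is_a z + count is_b z.
Proof. by elim: z => [|[] z IH] //=; rewrite IH; lia. Qed.

Lemma edit1_sym x y : edit1 x y -> edit1 y x.
Proof. by case=> u v *; [apply: ed_sub | apply: ed_ins | apply: ed_del]. Qed.

Lemma nedits_rcons k x y z : nedits k x y -> edit1 y z -> nedits k.+1 x z.
Proof.
elim=> [x0 | k' x0 y0 z0 Hxy _ IH] Hyz; last exact: nedS Hxy (IH Hyz).
exact: nedS Hyz (ned0 _).
Qed.

Lemma nedits_sym k x y : nedits k x y -> nedits k y x.
Proof.
elim=> [x0 | k' x0 y0 z0 Hxy _ IH]; first exact: ned0.
exact: nedits_rcons IH (edit1_sym Hxy).
Qed.

Lemma nedits_insert_b j u v : nedits j (u ++ v) (u ++ nseq j Lb ++ v).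
Proof.
elim: j u => [|j IH] u; first exact: ned0.
apply: nedS (ed_ins u v Lb) _.
by have := IH (rcons u Lb); rewrite -cats1 -!catA.
Qed.

Lemma edit1_count_b x y : edit1 x y -> count is_b y <= (count is_b x).+1.
Proof. by case=> u v [] *; rewrite !count_cat /=; try case: y0 => /=; lia. Qed.

Lemma nedits_count_b k x y : nedits k x y -> count is_b y <= count is_b x + k.
Proof.
elim=> [x0 | k' x0 y0 z0 Hxy _ IH]; first by rewrite addn0.
by have := edit1_count_b Hxy; lia.
Qed.

Lemma chain_rcons R x y z : chain R x y -> R y z -> chain R x z.
Proof.
elim=> [x0 | x0 y0 z0 Hxy _ IH] Hyz; last exact: chain_cons Hxy (IH Hyz).
exact: chain_cons Hyz (chain_nil _ _).
Qed.

Lemma chain_cat R x y z : chain R x y -> chain R y z -> chain R x z.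
Proof. by elim=> [//| x0 y0 z0 Hxy _ IH] /IH; apply: chain_cons. Qed.

Lemma chain_invariant (R : word -> word -> Prop) (P : word -> Prop) x y :
  (forall u v, R u v -> P u -> P v) -> chain R x y -> P x -> P y.
Proof. by move=> RP; elim=> // x0 y0 z0 /RP Hxy _ IH /Hxy. Qed.

Lemma ex_least (P : nat -> Prop) x :
  P x -> exists N, P N /\ forall M, P M -> N <= M.
Proof.
elim/ltn_ind: x => x IH Px.
have [[M [ltMx PM]] | noM] := classic (exists M, M < x /\ P M).
  exact: IH ltMx PM.
exists x; split=> // M PM; rewrite leqNgt; apply/negP => ltMx.
by apply: noM; exists M.
Qed.

Lemma cong2_size w z : cong 2 w z -> size w = size z.
Proof.
elim=> [u v | z0 | z1 z2 _ -> | z1 z2 z3 _ -> _ ->] //.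
by rewrite !size_cat.
Qed.

Section NormalForm.

Variable n : nat.
Hypothesis n_ge2 : 2 <= n.

(* [pi z = a^(a_exp z) b^(b_exp z)]: once a b has been read, each later a
   is absorbed through b a = b^n and contributes n - 1 letters b. *)
Definition b_weight (z : word) := count is_b z + n.-1 * count is_a z.

Fixpoint a_exp (z : word) : nat :=
  match z with [::] => 0 | La :: z' => (a_exp z').+1 | Lb :: _ => 0 end.

Fixpoint b_exp (z : word) : nat :=
  match z with [::] => 0 | La :: z' => b_exp z' | Lb :: z' => (b_weight z').+1 end.

Lemma a_exp_nseq_cat k z : a_exp (nseq k La ++ z) = k + a_exp z.
Proof. by elim: k => //= k ->. Qed.

Lemma b_exp_nseq_cat k z : b_exp (nseq k La ++ z) = b_exp z.
Proof. by elim: k. Qed.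

Lemma a_exp_akbm k m : a_exp (akbm k m) = k.
Proof. by rewrite /akbm a_exp_nseq_cat; case: m => [|m] /=; rewrite addn0. Qed.

Lemma b_exp_akbm k m : b_exp (akbm k m) = m.
Proof.
rewrite /akbm b_exp_nseq_cat; case: m => [|m] //=.
by rewrite /b_weight !count_nseq /= mul0n muln0 addn0 mul1n.
Qed.

Lemma exps_rel u v :
  a_exp (u ++ [:: Lb; La] ++ v) = a_exp (u ++ nseq n Lb ++ v) /\
  b_exp (u ++ [:: Lb; La] ++ v) = b_exp (u ++ nseq n Lb ++ v).
Proof.
elim: u => [|[] u IH] /=.
- rewrite -(prednK (ltnW n_ge2)) /=; split=> //.
  by rewrite /b_weight /= !count_cat !count_nseq /=; lia.
- by case: IH => -> ->.
- by split=> //; rewrite /b_weight !count_cat !count_nseq /=; lia.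
Qed.

Lemma cong_exps w z : cong n w z -> a_exp w = a_exp z /\ b_exp w = b_exp z.
Proof.
elim=> [u v | z0 | z1 z2 _ [-> ->] | z1 z2 z3 _ [-> ->] _ [-> ->]] //.
exact: exps_rel.
Qed.

Lemma redex_or_akbm z :
  (exists u v, z = u ++ [:: Lb; La] ++ v) \/ (exists k m, z = akbm k m).
Proof.
elim: z => [|x z [[u [v ->]] | [k [m ->]]]].
- by right; exists 0, 0.
- by left; exists (x :: u), v.
case: x; first by right; exists k.+1, m.
case: k => [|k]; first by right; exists 0, m.+1.
by left; exists [::], (nseq k La ++ nseq m Lb).
Qed.

Lemma rel_nedits u v : nedits n.-1 (u ++ [:: Lb; La] ++ v) (u ++ nseq n Lb ++ v).
Proof.
have -> : n.-1 = (n - 2).+1 by lia.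
have -> : nseq n Lb = [:: Lb; Lb] ++ nseq (n - 2) Lb.
  by rewrite -{1}(subnKC n_ge2).
rewrite -[u ++ [:: Lb; La] ++ v]/(u ++ [:: Lb] ++ La :: v) catA.
apply: nedS (ed_sub _ _ La Lb) _.
by have := nedits_insert_b (n - 2) (u ++ [:: Lb; Lb]) v; rewrite -!catA.
Qed.

Definition catenary_step (N : nat) (w u v : word) := cong n w v /\ lev_le N u v.

Lemma chain_to_akbm w z :
  cong n w z -> chain (catenary_step n.-1 w) z (akbm (a_exp z) (b_exp z)).
Proof.
move Hc: (count is_a z) => c; elim: c z Hc => [|c IH] z Hc Hwz;
  case: (redex_or_akbm z) => [[u [v Ez]] | [k [m ->]]];
  try by rewrite a_exp_akbm b_exp_akbm; apply: chain_nil.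
  by move: Hc; rewrite Ez !count_cat /=; lia.
have Hred : cong n w (u ++ nseq n Lb ++ v).
  by apply: cong_trans (cong_rel n u v); rewrite -Ez.
rewrite Ez; have [-> ->] := exps_rel u v.
apply: chain_cons (IH _ _ Hred).
  by split=> //; exists n.-1; split=> //; apply: rel_nedits.
by move: Hc; rewrite Ez !count_cat count_nseq /=; lia.
Qed.

Lemma cong_akbm z : cong n z (akbm (a_exp z) (b_exp z)).
Proof.
apply: chain_invariant (chain_to_akbm (cong_refl n z)) (cong_refl n z).
by move=> u v [].
Qed.

Lemma exps_cong w z : a_exp w = a_exp z -> b_exp w = b_exp z -> cong n w z.
Proof.
move=> Ea Eb; apply: cong_trans (cong_akbm w) _.
by rewrite Ea Eb; apply/cong_sym/cong_akbm.
Qed.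

Lemma chain_rev N w x y :
  chain (catenary_step N w) x y -> cong n w x -> chain (catenary_step N w) y x.
Proof.
elim=> [x0 | x0 y0 z0 [Hy [k [leN Hxy]]] _ IH] Hx; first exact: chain_nil.
apply: chain_rcons (IH Hy) _; split=> //.
by exists k; split=> //; apply: nedits_sym.
Qed.

Lemma catenary_ok_pred w : catenary_ok n n.-1 w.
Proof.
move=> z z' Hz Hz'.
have [Ea Eb] := cong_exps (cong_trans (cong_sym Hz) Hz').
apply: chain_cat (chain_to_akbm Hz) _.
by rewrite Ea Eb; apply: chain_rev (chain_to_akbm Hz') _.
Qed.

Lemma count_b_fact_ba v : cong n [:: Lb; La] v -> count is_b v = 1 \/ count is_b v = n.
Proof.
move=> /cong_exps [+ Eb]; case: v Eb => [|[] v] //= [Eb] _.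
rewrite /b_weight /= in Eb *.
by case: (count is_a v) Eb => [|[|c]] Eb; nia.
Qed.

Lemma chain_fact_ba_count_b M x y :
  M < n.-1 -> chain (catenary_step M [:: Lb; La]) x y ->
  count is_b x = 1 -> count is_b y = 1.
Proof.
move=> ltM; apply: (chain_invariant (P := fun z => count is_b z = 1)).
by move=> u v [/count_b_fact_ba + [k [leM /nedits_count_b]]]; lia.
Qed.

Lemma size_count_a z : size z + (n - 2) * count is_a z = n.-1 * a_exp z + b_exp z.
Proof.
elim: z => [|[] z IH] /=; first by rewrite !muln0.
  by rewrite mulnDr muln1 mulnS; lia.
rewrite /b_weight size_count_ab muln0 (_ : n.-1 = (n - 2).+1); last lia.
by rewrite mulSn; lia.
Qed.

Lemma a_exp_le_count z : a_exp z <= count is_a z.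
Proof. by elim: z => [|[] z IH]. Qed.

Lemma b_exp0_count_a z : b_exp z = 0 -> count is_a z = a_exp z.
Proof. by elim: z => [|[] z IH] //= /IH ->. Qed.

Lemma b_exp_gt0_count_a z :
  0 < b_exp z -> n.-1 * count is_a z < n.-1 * a_exp z + b_exp z.
Proof. by elim: z => [|[] z IH] //= => [/IH|]; rewrite /b_weight; lia. Qed.

(* q_{m,n} is the largest q with q (n - 1) < m. *)
Lemma qmn_bounds m :
  0 < m -> qmn m n * n.-1 < m /\ m <= (qmn m n).+1 * n.-1.
Proof.
move=> m_gt0; rewrite /qmn /dvdn.
have : m %% n.-1 < n.-1 by rewrite ltn_pmod //; lia.
have := divn_eq m n.-1; have -> : (m == 0) = false by lia.
case: (m %/ n.-1) => [|d]; case: (m %% n.-1) => [|r];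
  rewrite ?eqxx /=; nia.
Qed.

Lemma size_fact_range z : exists i, i <= qmn (b_exp z) n /\
  size z + qmn (b_exp z) n * (n - 2) = a_exp z + b_exp z + (n - 2) * i.
Proof.
have Hsize := size_count_a z; have Hle := a_exp_le_count z.
set q := qmn (b_exp z) n.
have late_a : count is_a z - a_exp z <= q.
  have [b0 | b_gt0] := posnP (b_exp z); first by rewrite b_exp0_count_a // subnn.
  have := b_exp_gt0_count_a b_gt0; have [_] := qmn_bounds b_gt0.
  rewrite -ltnS -(ltn_pmul2r (_ : 0 < n.-1)); nia.
exists (q - (count is_a z - a_exp z)); split; nia.
Qed.

Lemma fact_of_size k m l i : i <= qmn m n ->
  l + qmn m n * (n - 2) = k + m + (n - 2) * i ->
  exists z, a_exp z = k /\ b_exp z = m /\ size z = l.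
Proof.
have [-> | m_gt0] := posnP m.
  rewrite /qmn /= leqn0 => /eqP -> /=; rewrite !muln0 !addn0 => ->.
  by exists (akbm k 0); rewrite a_exp_akbm b_exp_akbm size_cat !size_nseq addn0.
have [Hq _] := qmn_bounds m_gt0; set q := qmn m n in Hq * => le_iq Hl.
(* a^k b a^j b^r with j = q - i late letters a and r = m - 1 - j (n - 1) *)
set j := q - i.
have Hj : j * n.-1 <= m.-1.
  by apply: leq_trans (_ : q * n.-1 <= _); [apply: leq_mul | ]; lia.
exists (nseq k La ++ Lb :: nseq j La ++ nseq (m.-1 - j * n.-1) Lb).
rewrite a_exp_nseq_cat b_exp_nseq_cat /= /b_weight.
rewrite !size_cat !count_cat !size_nseq !count_nseq /=.
split; first lia; split; first by rewrite mulnC; lia.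
have Ed : n.-1 = (n - 2).+1 by lia.
rewrite (_ : q = j + i) in Hl; last lia.
rewrite Ed mulnS in Hj *; rewrite mulnDl [(n - 2) * i]mulnC in Hl.
by rewrite size_cat !size_nseq; lia.
Qed.

End NormalForm.

Theorem theorem4p1 (n : nat) (hn : 2 <= n) :
  ((forall w : word, exists N, catenary_degree_elt n w N) /\
   (forall (w : word) (N : nat), catenary_degree_elt n w N -> N <= n - 1) /\
   (exists w : word, catenary_degree_elt n w (n - 1))) /\
  (half_factorial n <-> n = 2) /\
  (forall k m l : nat,
     lengths n (akbm k m) l <->
     exists i, i <= qmn m n /\ l + qmn m n * (n - 2) = k + m + (n - 2) * i).
Proof.
have ok w : catenary_ok n (n - 1) w by rewrite subn1; apply: catenary_ok_pred.
have ba_bn : cong n [:: Lb; La] (nseq n Lb).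
  by have := cong_rel n [::] [::]; rewrite /= cats0.
split; [split; [|split] | split].
- by move=> w; apply: ex_least (ok w).
- by move=> w N [_]; apply.
- exists [:: Lb; La]; split=> // M okM; rewrite leqNgt; apply/negP => ltM.
  rewrite subn1 in ltM.
  have := chain_fact_ba_count_b hn ltM (okM _ _ (cong_refl n _) ba_bn) erefl.
  by rewrite count_nseq /=; lia.
- split=> [hf | ->].
    by have := hf _ _ _ (cong_refl n _) ba_bn; rewrite size_nseq.
  by move=> w z z' /cong2_size <- /cong2_size.
- move=> k m l; split=> [[z [Hz <-]] | [i [le_iq Hl]]].
    have [] := cong_exps hn Hz; rewrite a_exp_akbm b_exp_akbm => -> ->.
    exact: size_fact_range.
  have [z [Ea [Eb <-]]] := fact_of_size hn le_iq Hl.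
  by exists z; split=> //; apply: exps_cong; rewrite ?a_exp_akbm ?b_exp_akbm.
Qed.
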